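(* For every $n\geq1$, $$\sum_{\sigma\in\mathfrak S_{n+1}}(-1)^{{\rm des}(\sigma)}\Bigl(\frac{\beta}{2}\Bigr)^{{\rm LRmin}(\sigma)+{\rm RLmin}(\sigma)-2}=\begin{cases}(-1)^{\frac n2}\displaystyle\sum_{\sigma\in\mathfrak S^{d}_n}\beta^{{\rm RLmin}(\sigma)},& n\text{ even},\\ 0,& n\text{ odd},\end{cases}$$ where $\mathfrak S^d_n$ is the set of down-up permutations of $[n]$.
   Context: For $\sigma=\sigma_1\cdots\sigma_m\in\mathfrak S_m$: ${\rm des}(\sigma)$ is the number of $i\in[m-1]$ with $\sigma_i>\sigma_{i+1}$; ${\rm LRmin}(\sigma)$ is the number of $i$ with $\sigma_j>\sigma_i$ for all $j<i$; ${\rm RLmin}(\sigma)$ is the number of $i$ with $\sigma_j>\sigma_i$ for all $j>i$. A permutation is down-up if $\sigma_1>\sigma_2<\sigma_3>\sigma_4<\cdots$. *)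

From mathcomp Require Import all_boot all_order all_algebra all_fingroup.
Set Implicit Arguments. Unset Strict Implicit. Unset Printing Implicit Defensive.

(* One-line notation sigma_1 ... sigma_m of a permutation of 'I_m
   (values shifted by -1, irrelevant for all comparisons below). *)
Definition pword m (s : 'S_m) : seq nat := [seq val (s i) | i <- enum 'I_m].

(* positions are 0-based here: position i corresponds to i+1 in the paper *)
Definition des_seq (l : seq nat) : nat :=
  count (fun i => nth 0 l i.+1 < nth 0 l i) (iota 0 (size l).-1).

Definition lrmin_seq (l : seq nat) : nat :=
  count (fun i => all (fun j => nth 0 l i < nth 0 l j) (iota 0 i))
        (iota 0 (size l)).

Definition rlmin_seq (l : seq nat) : nat :=
  count (fun i => all (fun j => nth 0 l i < nth 0 l j)
                      (iota i.+1 (size l - i.+1)))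
        (iota 0 (size l)).

(* down-up: sigma_1 > sigma_2 < sigma_3 > ... ; 0-based position i even
   means a descent at (i, i+1), odd means an ascent. *)
Definition downup_seq (l : seq nat) : bool :=
  all (fun i => if odd i then nth 0 l i < nth 0 l i.+1
                else nth 0 l i.+1 < nth 0 l i)
      (iota 0 (size l).-1).

Definition des m (s : 'S_m) := des_seq (pword s).
Definition LRmin m (s : 'S_m) := lrmin_seq (pword s).
Definition RLmin m (s : 'S_m) := rlmin_seq (pword s).
Definition downup m (s : 'S_m) := downup_seq (pword s).

(* Cut a permutation of [0, n] at its minimum, sigma = a 0 b.  The minimum is
   the last left-to-right minimum of a 0 and the first right-to-left minimum
   of 0 b, and it adds a descent unless a is empty; so the left-hand side is a
   binomial convolution, i.e. a product of exponential generating functions,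
   of a sum over prefixes weighted by LRmin and one over suffixes weighted by
   RLmin.  Cutting these at their minima again yields the differential
   equations L' = -beta T L and T' = 1 - T^2 for the EGF L of the left-hand
   side and the EGF T of (-1)^des minus 1, so T = tanh.  Cutting a down-up
   permutation at its minimum gives D' = beta tan D, and tanh x = -i tan (i x)
   turns this into the same equation for the signed even part of D.  All of
   this is carried out on coefficient sequences. *)

From mathcomp Require Import all_boot all_order all_algebra all_fingroup.
From mathcomp Require Import zify ring.
Import GRing.Theory Num.Theory.

Set Implicit Arguments. Unset Strict Implicit. Unset Printing Implicit Defensive.

Lemma iota_succ m n : iota m.+1 n = map succn (iota m n).
Proof. by rewrite -addn1 addnC iotaDl. Qed.

Lemma all_nth_iota (P : pred nat) l :
  all (fun j => P (nth 0 l j)) (iota 0 (size l)) = all P l.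
Proof. by rewrite -[l in RHS](mkseq_nth 0) /mkseq all_map. Qed.

Lemma des_seq_cons y l : des_seq (y :: l) = ((head y l < y) + des_seq l)%N.
Proof.
rewrite /des_seq /=; case: l => [|z l] /=; first by rewrite ltnn.
by rewrite iota_succ count_map.
Qed.

Lemma rlmin_seq_cons y l :
  rlmin_seq (y :: l) = (rlmin_seq l + all (fun z => y < z) l)%N.
Proof.
rewrite /rlmin_seq /= [iota 1 (size l)]iota_succ count_map subn1 /= addnC; congr (_ + _)%N.
  by apply: eq_count => i /=; rewrite subSS iota_succ all_map.
by rewrite iota_succ all_map -(all_nth_iota (fun z => y < z)).
Qed.

Lemma lrmin_seq_rcons l z :
  lrmin_seq (rcons l z) = (lrmin_seq l + all (fun y => z < y) l)%N.
Proof.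
rewrite /lrmin_seq size_rcons -addn1 iotaD count_cat /= addn0; congr (_ + _)%N.
  apply: eq_in_count => i; rewrite mem_iota /= => ilt.
  rewrite nth_rcons ilt; apply: eq_in_all => j; rewrite mem_iota /= => jlt.
  by rewrite nth_rcons (ltn_trans jlt ilt).
rewrite nth_rcons ltnn eqxx -(all_nth_iota (fun y => z < y)).
by congr (nat_of_bool _); apply: eq_in_all => j; rewrite mem_iota /= => jlt; rewrite nth_rcons jlt.
Qed.

Definition alternating b (l : seq nat) :=
  all (fun i => if odd (b + i) then nth 0 l i < nth 0 l i.+1
                else nth 0 l i.+1 < nth 0 l i) (iota 0 (size l).-1).

Lemma downup_seqE l : downup_seq l = alternating 0 l.
Proof. by []. Qed.

Lemma alternating_cons b y l : alternating b (y :: l) =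
  (if l is z :: _ then (if odd b then y < z else z < y) else true)
  && alternating b.+1 l.
Proof.
case: l => [|z l] //=; rewrite /alternating /= iota_succ all_map addn0.
by congr andb; apply: eq_all => i /=; rewrite addnS.
Qed.

Lemma alternating_odd b c l : odd b = odd c -> alternating b l = alternating c l.
Proof. by move=> h; apply: eq_all => i; rewrite !oddD h. Qed.

Section CatAtMin.
Variables (x : nat) (a b : seq nat).
Hypotheses (xa : all (fun z => x < z) a) (xb : all (fun z => x < z) b).

Lemma rlmin_seq_cat_min : rlmin_seq (a ++ x :: b) = (rlmin_seq b).+1.
Proof.
elim: a xa => [|y a' IH] /=; first by rewrite rlmin_seq_cons xb addn1.
case/andP=> xy ha; rewrite rlmin_seq_cons IH // all_cat /= ltnNge (ltnW xy).
by rewrite andbF addn0.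
Qed.

Lemma lrmin_seq_cat_min : lrmin_seq (a ++ x :: b) = (lrmin_seq a).+1.
Proof.
elim/last_ind: b xb => [|b' z IH]; first by rewrite cats1 lrmin_seq_rcons xa addn1.
rewrite all_rcons => /andP[xz hb].
rewrite -rcons_cons -rcons_cat lrmin_seq_rcons IH // all_cat /= ltnNge (ltnW xz).
by rewrite andbF addn0.
Qed.

Lemma des_seq_cat_min :
  des_seq (a ++ x :: b) = (des_seq a + des_seq b + (a != [::]))%N.
Proof.
elim: a xa => [|y a' IH] /=.
  rewrite des_seq_cons; case: b xb => [|z b'] /=; first by rewrite ltnn.
  by case/andP=> xz _; rewrite ltnNge (ltnW xz) /= addn0.
case/andP=> xy ha; rewrite !des_seq_cons IH //.
by case: a' {IH ha} => [|z a'] /=; [rewrite xy ltnn /=|]; lia.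
Qed.

Lemma alternating_cat_min c : alternating c (a ++ x :: b) =
  [&& alternating c a, (a ++ b == [::]) || odd (c + size a)
    & alternating (c + size a).+1 b].
Proof.
elim: a xa c => [|y a' IH] /= ha c.
  rewrite alternating_cons addn0; case: b xb => [|z b'] /=; first by [].
  by case/andP=> xz _; rewrite xz ltnNge (ltnW xz) /=; case: (odd c).
case/andP: ha => xy ha; rewrite !alternating_cons IH // addSn addnS.
case: a' {IH ha} => [|z a'] /=; last by rewrite andbA.
rewrite xy ltnNge (ltnW xy) /= addn0 /alternating /=.
by case: (odd c); case: (b) => /=.
Qed.

End CatAtMin.

Definition order_invariant T (f : seq nat -> T) :=
  forall (g : nat -> nat) l, {in l &, {mono g : u v / u < v}} -> f (map g l) = f l.

Section OrderInvariance.
Variables (g : nat -> nat) (l : seq nat).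
Hypothesis g_mono : {in l &, {mono g : u v / u < v}}.

Lemma nth_map_ltn i j : i < size l -> j < size l ->
  (nth 0 (map g l) i < nth 0 (map g l) j) = (nth 0 l i < nth 0 l j).
Proof. by move=> hi hj; rewrite !(nth_map 0) // g_mono // mem_nth. Qed.

Lemma des_seq_map : des_seq (map g l) = des_seq l.
Proof.
rewrite /des_seq size_map; apply: eq_in_count => i; rewrite mem_iota /= => hi.
by rewrite nth_map_ltn //; lia.
Qed.

Lemma lrmin_seq_map : lrmin_seq (map g l) = lrmin_seq l.
Proof.
rewrite /lrmin_seq size_map; apply: eq_in_count => i; rewrite mem_iota /= => hi.
apply: eq_in_all => j; rewrite mem_iota /= => hj.
by rewrite nth_map_ltn // (ltn_trans hj hi).
Qed.

Lemma rlmin_seq_map : rlmin_seq (map g l) = rlmin_seq l.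
Proof.
rewrite /rlmin_seq size_map; apply: eq_in_count => i; rewrite mem_iota /= => hi.
by apply: eq_in_all => j; rewrite mem_iota => /andP[h1 h2]; rewrite nth_map_ltn //; lia.
Qed.

Lemma alternating_map b : alternating b (map g l) = alternating b l.
Proof.
rewrite /alternating size_map; apply: eq_in_all => i; rewrite mem_iota /= => hi.
by rewrite !nth_map_ltn //; lia.
Qed.

End OrderInvariance.

Definition ins_at j (x : nat) t := take j t ++ x :: drop j t.

Lemma ins_at0 x t : ins_at 0 x t = x :: t.
Proof. by rewrite /ins_at take0 drop0. Qed.

Lemma perm_ins_at j x t : perm_eq (ins_at j x t) (x :: t).
Proof. by rewrite /ins_at -cat1s perm_catCA /= cat_take_drop. Qed.

Lemma map_ins_at (h : nat -> nat) j y t :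
  map h (ins_at j y t) = ins_at j (h y) (map h t).
Proof. by rewrite /ins_at map_cat /= map_take map_drop. Qed.

Lemma index_ins_at j x t : x \notin t -> j <= size t -> index x (ins_at j x t) = j.
Proof.
move=> xt jt; rewrite /ins_at index_cat (negbTE (contra (@mem_take _ _ _ _) xt)).
by rewrite /= eqxx addn0 size_takel.
Qed.

Lemma ins_at_inj j x t1 t2 : j <= size t1 -> j <= size t2 ->
  ins_at j x t1 = ins_at j x t2 -> t1 = t2.
Proof.
move=> h1 h2 e; have [e1 e2] := (congr1 (take j) e, congr1 (drop j) e).
rewrite /ins_at !take_size_cat ?size_takel // in e1.
rewrite /ins_at !drop_size_cat ?size_takel // in e2; case: e2 => e2.
by rewrite -(cat_take_drop j t1) -(cat_take_drop j t2) e1 e2.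
Qed.

Lemma take_ins_at_lt j i a l : j < i -> j <= size l ->
  take i (ins_at j a l) = ins_at j a (take i.-1 l) /\
  drop i (ins_at j a l) = drop i.-1 l.
Proof.
elim: l i j => [|y l IH] [|i] [|j] //=; rewrite ?ins_at0 //.
by case: i => [|i] ji //= jl; have [-> ->] := IH i.+1 j ji jl.
Qed.

Lemma take_ins_at_ge j i a l : i <= j -> j <= size l ->
  take i (ins_at j a l) = take i l /\
  drop i (ins_at j a l) = ins_at (j - i) a (drop i l).
Proof.
elim: l i j => [|y l IH] [|i] [|j] //=; rewrite ?ins_at0 ?subn0 ?take0 ?drop0 //.
by move=> ij jl; rewrite subSS; have [<- <-] := IH i j ij jl.
Qed.

Lemma permutations_cons_ins_at x s : x \notin s ->
  perm_eq (permutations (x :: s))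
    [seq ins_at j x t | t <- permutations s, j <- iota 0 (size s).+1].
Proof.
move=> xs; apply: uniq_perm; first exact: permutations_uniq.
  apply: allpairs_uniq_dep; first exact: permutations_uniq.
    by move=> t _; apply: iota_uniq.
  move=> [t1 j1] [t2 j2] /allpairsPdep[t1' [j1' [h1 hj1 [-> ->]]]].
  move=> /allpairsPdep[t2' [j2' [h2 hj2 [-> ->]]]] /= e.
  move: h1 h2; rewrite !mem_permutations => h1 h2.
  rewrite mem_iota /= ltnS -(perm_size h1) in hj1.
  rewrite mem_iota /= ltnS -(perm_size h2) in hj2.
  have x1 : x \notin t1' by rewrite (perm_mem h1).
  have x2 : x \notin t2' by rewrite (perm_mem h2).
  have ej : j1' = j2' by rewrite -(index_ins_at x1 hj1) e index_ins_at.
  by move: e; rewrite ej => /ins_at_inj -> //; rewrite -ej.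
move=> t; rewrite mem_permutations; apply/idP/allpairsPdep; last first.
  by case=> t' [j [+ _ ->]]; rewrite mem_permutations (permPl (perm_ins_at _ _ _)) perm_cons.
move=> pt; have xt : x \in t by rewrite (perm_mem pt) mem_head.
set j := index x t; have jt : j < size t by rewrite index_mem.
have et : t = take j t ++ x :: drop j.+1 t.
  by rewrite -{1}(cat_take_drop j t) (drop_nth 0 jt) nth_index.
exists (take j t ++ drop j.+1 t), j; split.
- rewrite mem_permutations -(perm_cons x) perm_sym -(permPl pt).
  by rewrite {1}et -cat1s perm_catCA.
- by rewrite mem_iota /= ltnS -ltnS -[(size s).+1]/(size (x :: s)) -(perm_size pt).
- by rewrite /ins_at take_size_cat ?size_takel ?drop_size_cat ?size_takel // ltnW.
Qed.

Lemma permutations_map_addn c s : perm_eq (permutations (map (addn c) s))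
  (map (map (addn c)) (permutations s)).
Proof.
apply: uniq_perm; first exact: permutations_uniq.
  by rewrite map_inj_uniq ?permutations_uniq //; apply/inj_map/addnI.
move=> t; rewrite mem_permutations; apply/idP/mapP; last first.
  by case=> t' pt' ->; apply: perm_map; rewrite -mem_permutations.
move=> pt; have ht : map (addn c \o subn^~ c) t = t.
  rewrite -[RHS]map_id; apply/eq_in_map => u ut /=.
  by have := ut; rewrite (perm_mem pt) => /mapP[w _ ->]; rewrite addKn.
exists (map (subn^~ c) t); last by rewrite -map_comp ht.
by rewrite mem_permutations; apply: (perm_map_inj (@addnI c)); rewrite -map_comp ht.
Qed.

Local Open Scope ring_scope.

Section BinomialConvolution.
Variable R : comRingType.
Implicit Types u v w : nat -> R.

Definition bconv u v n : R := \sum_(k < n.+1) (u k * v (n - k)%N) *+ 'C(n, k).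

Definition delta0 k : R := (k == 0%N)%:R.

Lemma eq_bconv u u' v v' n : (forall k, (k <= n)%N -> u k = u' k) ->
  (forall k, (k <= n)%N -> v k = v' k) -> bconv u v n = bconv u' v' n.
Proof.
move=> hu hv; apply: eq_bigr => k _.
by rewrite hu ?hv ?leq_subr // -ltnS ltn_ord.
Qed.

Lemma bconv0 u v : bconv u v 0 = u 0%N * v 0%N.
Proof. by rewrite /bconv big_ord1 /= bin0 mulr1n. Qed.

(* Leibniz rule: on exponential generating functions [bconv] is the product
   and shifting a sequence is differentiation. *)
Lemma bconvS u v n :
  bconv u v n.+1 = bconv (fun k => u k.+1) v n + bconv u (fun k => v k.+1) n.
Proof.
rewrite /bconv big_ord_recl /= subn0 bin0 mulr1n.
under eq_bigr => k _ do rewrite /bump /= add1n subSS binS mulrnDr.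
rewrite big_split /= [X in _ + X]addrC addrCA; congr (_ + _).
rewrite [in RHS]big_ord_recl /= subn0 bin0 mulr1n; congr (_ + _).
rewrite big_ord_recr /= bin_small // mulr0n addr0.
by apply: eq_bigr => k _; rewrite /bump /= add1n -subSn.
Qed.

Lemma bconvDl u1 u2 v n :
  bconv (fun k => u1 k + u2 k) v n = bconv u1 v n + bconv u2 v n.
Proof. by rewrite /bconv -big_split; apply: eq_bigr => k _; rewrite mulrDl mulrnDl. Qed.

Lemma bconvDr u v1 v2 n :
  bconv u (fun k => v1 k + v2 k) n = bconv u v1 n + bconv u v2 n.
Proof. by rewrite /bconv -big_split; apply: eq_bigr => k _; rewrite mulrDr mulrnDl. Qed.

Lemma bconvZl c u v n : bconv (fun k => c * u k) v n = c * bconv u v n.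
Proof. by rewrite /bconv mulr_sumr; apply: eq_bigr => k _; rewrite mulrnAr mulrA. Qed.

Lemma bconvNl u v n : bconv (fun k => - u k) v n = - bconv u v n.
Proof. by rewrite /bconv -sumrN; apply: eq_bigr => k _; rewrite mulNr mulNrn. Qed.

Lemma bconvZr c u v n : bconv u (fun k => c * v k) n = c * bconv u v n.
Proof.
by rewrite /bconv mulr_sumr; apply: eq_bigr => k _; rewrite mulrnAr mulrCA.
Qed.

Lemma bconvC u v n : bconv u v n = bconv v u n.
Proof.
elim: n u v => [|n IH] u v; first by rewrite !bconv0 mulrC.
by rewrite !bconvS IH addrC IH.
Qed.

Lemma bconvA u v w n : bconv (bconv u v) w n = bconv u (bconv v w) n.
Proof.
elim: n u v w => [|n IH] u v w; first by rewrite !bconv0 mulrA.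
rewrite !bconvS.
have -> : bconv (fun k => bconv u v k.+1) w n =
    bconv (fun k => bconv (fun k => u k.+1) v k + bconv u (fun k => v k.+1) k) w n.
  by apply: eq_bconv => // k _; rewrite bconvS.
have -> : bconv u (fun k => bconv v w k.+1) n =
    bconv u (fun k => bconv (fun k => v k.+1) w k + bconv v (fun k => w k.+1) k) n.
  by apply: eq_bconv => // k _; rewrite bconvS.
by rewrite bconvDl bconvDr !IH addrA.
Qed.

Lemma bconv1l v n : bconv delta0 v n = v n.
Proof.
rewrite /bconv big_ord_recl /= subn0 bin0 mulr1n /delta0 mul1r big1 ?addr0 //.
by move=> k _; rewrite mul0r mul0rn.
Qed.

Lemma bconv1r v n : bconv v delta0 n = v n.
Proof. by rewrite bconvC bconv1l. Qed.

Lemma causal_rec_eq (F : (nat -> R) -> nat -> R) u v :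
  (forall w w' n, (forall k, (k <= n)%N -> w k = w' k) -> F w n = F w' n) ->
  u 0%N = v 0%N -> (forall n, u n.+1 = F u n) -> (forall n, v n.+1 = F v n) ->
  forall n, u n = v n.
Proof.
move=> F_causal uv0 urec vrec; elim/ltn_ind => -[|n] IH //.
by rewrite urec vrec; apply: F_causal => k kn; apply: IH.
Qed.

End BinomialConvolution.

Section PermutationSums.
Variable R : comRingType.
Implicit Types (f phi psi : seq nat -> R).

Definition psum f k := \sum_(t <- permutations (iota 0 k)) f t.

Lemma psum0 f : psum f 0 = f [::].
Proof. by rewrite /psum /= big_seq1. Qed.

Lemma psum1 f : psum f 1 = f [:: 0%N].
Proof. by rewrite /psum /= big_seq1. Qed.

Lemma size_permutations_iota a n l : l \in permutations (iota a n) -> size l = n.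
Proof. by rewrite mem_permutations => /perm_size ->; rewrite size_iota. Qed.

Lemma all_permutations_iota a n l :
  l \in permutations (iota a n) -> all (fun z => a <= z)%N l.
Proof.
rewrite mem_permutations => pl; apply/allP => u.
by rewrite (perm_mem pl) mem_iota => /andP[].
Qed.

Lemma big_permutations_cons x s F : x \notin s ->
  \sum_(t <- permutations (x :: s)) (F t : R) =
  \sum_(t <- permutations s) \sum_(j <- iota 0 (size s).+1) F (ins_at j x t).
Proof.
by move=> xs; rewrite (perm_big _ (permutations_cons_ins_at xs)) big_allpairs_dep.
Qed.

Lemma big_permutations_iota c k F :
  \sum_(t <- permutations (iota c k)) (F t : R) =
  \sum_(t <- permutations (iota 0 k)) F (map (addn c) t).
Proof.
rewrite -[c in iota c]addn0 iotaDl.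
by rewrite (perm_big _ (permutations_map_addn _ _)) big_map.
Qed.

Definition adjoin_min phi (l : seq nat) : R :=
  \sum_(j <- iota 0 (size l).+1) phi (ins_at j 0 (map succn l)).

Lemma invariant_ins_at_min phi j a l : order_invariant phi ->
  all (fun z => a < z)%N l -> phi (ins_at j a l) = phi (ins_at j 0 (map succn l)).
Proof.
move=> phi_inv al; pose h v := if v == a then 0%N else v.+1.
have al' w : w \in l -> (a < w)%N by move/allP: al; apply.
have -> : map succn l = map h l.
  by apply/eq_in_map => u /al'; rewrite /h; case: eqP => // ->; rewrite ltnn.
have -> : 0%N = h a by rewrite /h eqxx.
rewrite -map_ins_at; apply/esym/phi_inv => u v.
rewrite !(perm_mem (perm_ins_at j a l)) !inE /h.
case: (eqVneq u a) => [-> _|ua /= /al' hu]; case: (eqVneq v a) => [-> _|va /= /al' hv].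
- by rewrite !ltnn.
- by rewrite hv.
- by rewrite [RHS]ltnNge (ltnW hu).
- by rewrite ltnS.
Qed.

Lemma adjoin_min_invariant phi : order_invariant phi -> order_invariant (adjoin_min phi).
Proof.
move=> phi_inv g l g_mono; rewrite /adjoin_min size_map; apply: eq_bigr => j _.
pose g' v := if v is w.+1 then (g w).+1 else 0%N.
have -> : map succn (map g l) = map g' (map succn l) by rewrite -!map_comp.
have -> : 0%N = g' 0%N by [].
rewrite -map_ins_at; apply: phi_inv => u v.
rewrite !(perm_mem (perm_ins_at j 0 (map succn l))) !inE.
case: u => [|u]; case: v => [|v] //=; rewrite !ltnS => hu hv.
by apply: g_mono; rewrite -(mem_map succn_inj).
Qed.

Lemma psum_adjoin_min phi k : psum (adjoin_min phi) k = psum phi k.+1.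
Proof.
rewrite /psum [iota 0 k.+1]/= big_permutations_cons; last by rewrite mem_iota ltnn.
rewrite (big_permutations_iota 1 k) size_iota !big_seq; apply: eq_bigr => t ht.
by rewrite /adjoin_min (size_permutations_iota ht).
Qed.

Lemma big_ins_at_take_drop phi psi a n i l :
  order_invariant phi -> order_invariant psi -> (i <= n.+1)%N -> size l = n ->
  all (fun z => a < z)%N l ->
  \sum_(j <- iota 0 n.+1) phi (take i (ins_at j a l)) * psi (drop i (ins_at j a l)) =
  (if i is i'.+1 then adjoin_min phi (take i' l) * psi (drop i' l) else 0) +
  (if (i <= n)%N then phi (take i l) * adjoin_min psi (drop i l) else 0).
Proof.
move=> phi_inv psi_inv hi hl al.
rewrite -{1}(subnKC hi) iotaD big_cat /=; congr (_ + _).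
  case: i hi => [|i] hi; first by rewrite big_nil.
  rewrite /adjoin_min size_takel ?hl // mulr_suml; apply: eq_big_seq => j.
  rewrite mem_iota /= => ji; have jl : (j <= size l)%N by rewrite hl; lia.
  have [-> ->] := take_ins_at_lt a ji jl.
  by rewrite invariant_ins_at_min //; apply/allP => z /mem_take; move/allP: al; apply.
rewrite -[i in iota i]addn0 iotaDl big_map.
case: leqP => hin; last by rewrite (_ : (n.+1 - i = 0)%N) ?big_nil //; lia.
rewrite /adjoin_min size_drop hl -subSn // mulr_sumr; apply: eq_big_seq => j.
rewrite mem_iota /= => jn; have jl : (i + j <= size l)%N by rewrite hl; lia.
have [-> ->] := take_ins_at_ge a (leq_addr j i) jl.
by rewrite addKn invariant_ins_at_min //; apply/allP => z /mem_drop; move/allP: al; apply.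
Qed.

(* Choosing which [i] values form the prefix gives the binomial coefficient. *)
Lemma big_permutations_take_drop n : forall phi psi a i,
  order_invariant phi -> order_invariant psi -> (i <= n)%N ->
  \sum_(l <- permutations (iota a n)) phi (take i l) * psi (drop i l) =
  (psum phi i * psum psi (n - i)) *+ 'C(n, i).
Proof.
elim: n => [|n IH] phi psi a i phi_inv psi_inv hi.
  by case: i hi => // _; rewrite /psum /= !big_seq1 mulr1n.
rewrite [iota a n.+1]/= big_permutations_cons ?mem_iota ?ltnn // size_iota.
rewrite (eq_big_seq (fun l =>
    (if i is i'.+1 then adjoin_min phi (take i' l) * psi (drop i' l) else 0) +
    (if (i <= n)%N then phi (take i l) * adjoin_min psi (drop i l) else 0))); last first.
  move=> l hl; apply: big_ins_at_take_drop => //; first exact: size_permutations_iota hl.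
  by apply/allP => z /(allP (all_permutations_iota hl)).
have adj_inv := adjoin_min_invariant.
rewrite big_split /=; case: i hi => [|i] hi.
  rewrite big1 // add0r IH //; last exact: adj_inv.
  by rewrite !subn0 psum_adjoin_min !bin0.
rewrite IH //; last exact: adj_inv.
rewrite psum_adjoin_min subSS; case: (leqP i.+1 n) => hin.
  rewrite IH //; last exact: adj_inv.
  by rewrite psum_adjoin_min -subSn // binS -mulrnDr addnC.
have ein : i = n by lia.
by rewrite big1 ?addr0 ?ein ?subnn ?binn.
Qed.

Lemma psum_split_at_min f phi psi c n :
  order_invariant phi -> order_invariant psi ->
  (forall a b, all (fun z => 0 < z)%N a -> all (fun z => 0 < z)%N b ->
     (size a + size b)%N = n -> f (a ++ 0%N :: b) = c * (phi a * psi b)) ->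
  psum f n.+1 = c * bconv (psum phi) (psum psi) n.
Proof.
move=> phi_inv psi_inv f_split.
rewrite /psum [iota 0 n.+1]/= big_permutations_cons ?mem_iota // size_iota.
rewrite (eq_big_seq (fun l =>
    c * \sum_(j <- iota 0 n.+1) phi (take j l) * psi (drop j l))); last first.
  move=> l hl; rewrite mulr_sumr; apply: eq_bigr => j _.
  have l_pos := allP (all_permutations_iota hl).
  rewrite /ins_at f_split //.
  - by apply/allP => z /mem_take /l_pos.
  - by apply/allP => z /mem_drop /l_pos.
  - by rewrite -size_cat cat_take_drop (size_permutations_iota hl).
rewrite -mulr_sumr exchange_big /bconv -(big_mkord xpredT
  (fun k => (psum phi k * psum psi (n - k)%N) *+ 'C(n, k))).
rewrite /index_iota subn0; congr (c * _); apply: eq_big_seq => j.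
by rewrite mem_iota /= ltnS => jn; apply: big_permutations_take_drop.
Qed.

End PermutationSums.

Section Weights.
Variable R : comRingType.
Implicit Types (x b : R) (t : seq nat).

Definition sdes t : R := (-1) ^+ des_seq t.

(* The sign of [a] as the prefix of [a ++ 0 :: b]: it also counts the
   descent into the minimum. *)
Definition sdes_pre t : R := (-1) ^+ (des_seq t + (t != [::])).

Definition lr_weight x t := sdes_pre t * x ^+ lrmin_seq t.
Definition rl_weight x t := sdes t * x ^+ rlmin_seq t.
Definition lrrl_weight x t := sdes t * x ^+ (lrmin_seq t + rlmin_seq t - 2).
Definition odd_downup t : R := (odd (size t) && downup_seq t)%:R.
Definition downup_weight b t := (downup_seq t)%:R * b ^+ rlmin_seq t.

Lemma sdes_invariant : order_invariant sdes.
Proof. by move=> g l g_mono; rewrite /sdes des_seq_map. Qed.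

Lemma sdes_pre_invariant : order_invariant sdes_pre.
Proof. by move=> g l g_mono; rewrite /sdes_pre des_seq_map //; case: l {g_mono}. Qed.

Lemma lr_weight_invariant x : order_invariant (lr_weight x).
Proof. by move=> g l g_mono; rewrite /lr_weight sdes_pre_invariant ?lrmin_seq_map. Qed.

Lemma rl_weight_invariant x : order_invariant (rl_weight x).
Proof. by move=> g l g_mono; rewrite /rl_weight sdes_invariant ?rlmin_seq_map. Qed.

Lemma odd_downup_invariant : order_invariant odd_downup.
Proof.
by move=> g l g_mono; rewrite /odd_downup size_map !downup_seqE alternating_map.
Qed.

Lemma downup_weight_invariant b : order_invariant (downup_weight b).
Proof.
by move=> g l g_mono; rewrite /downup_weight !downup_seqE alternating_map ?rlmin_seq_map.
Qed.

Lemma psum_sdesS m : psum sdes m.+1 = bconv (psum sdes_pre) (psum sdes) m.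
Proof.
rewrite -[RHS]mul1r; apply: psum_split_at_min;
  [exact: sdes_pre_invariant|exact: sdes_invariant|] => a b' ha hb _.
by rewrite /sdes_pre /sdes des_seq_cat_min // !exprD mul1r; ring.
Qed.

Lemma psum_sdes_pre k : psum sdes_pre k = if k == 0%N then 1 else - psum sdes k.
Proof.
case: k => [|k]; first by rewrite psum0 /sdes_pre expr0.
rewrite /= /psum -sumrN; apply: eq_big_seq => t ht.
rewrite /sdes_pre /sdes -size_eq0 (size_permutations_iota ht).
by rewrite addn1 exprS mulN1r.
Qed.

Lemma psum_lrrl_split x n :
  psum (lrrl_weight x) n.+1 = bconv (psum (lr_weight x)) (psum (rl_weight x)) n.
Proof.
rewrite -[RHS]mul1r; apply: psum_split_at_min;
  [exact: lr_weight_invariant|exact: rl_weight_invariant|] => a b' ha hb _.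
rewrite /lrrl_weight /lr_weight /rl_weight /sdes_pre /sdes.
rewrite des_seq_cat_min // lrmin_seq_cat_min // rlmin_seq_cat_min // !addSn subSS.
by rewrite addnS subSS subn0 !exprD; ring.
Qed.

Lemma psum_lr_weightS x k :
  psum (lr_weight x) k.+1 = - x * bconv (psum (lr_weight x)) (psum sdes) k.
Proof.
apply: psum_split_at_min;
  [exact: lr_weight_invariant|exact: sdes_invariant|] => a b' ha hb _.
rewrite /lr_weight /sdes_pre /sdes des_seq_cat_min // lrmin_seq_cat_min //.
by case: a {ha} => [|y a] /=; rewrite !exprD !exprS; ring.
Qed.

Lemma psum_rl_weightS x m :
  psum (rl_weight x) m.+1 = x * bconv (psum sdes_pre) (psum (rl_weight x)) m.
Proof.
apply: psum_split_at_min;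
  [exact: sdes_pre_invariant|exact: rl_weight_invariant|] => a b' ha hb _.
by rewrite /rl_weight /sdes_pre /sdes des_seq_cat_min // rlmin_seq_cat_min // !exprD !exprS; ring.
Qed.

(* Cutting a down-up permutation at its minimum leaves an odd-length down-up
   prefix and a down-up suffix. *)
Lemma psum_downup_weightS b n : (0 < n)%N ->
  psum (downup_weight b) n.+1 = b * bconv (psum odd_downup) (psum (downup_weight b)) n.
Proof.
move=> n_gt0; apply: psum_split_at_min;
  [exact: odd_downup_invariant|exact: downup_weight_invariant|] => a b' ha hb hs.
rewrite /odd_downup /downup_weight rlmin_seq_cat_min // !downup_seqE.
rewrite alternating_cat_min // add0n -size_eq0 size_cat hs eqn0Ngt n_gt0 /=.
case ho: (odd (size a)) => /=; last by rewrite andbF !mul0r mulr0.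
rewrite (@alternating_odd (size a).+1 0 b'); last by rewrite /= ho.
by rewrite exprS; case: (alternating 0 a); case: (alternating 0 b'); rewrite /=; ring.
Qed.

Lemma psum_odd_downup k : psum odd_downup k = (odd k)%:R * psum (downup_weight 1) k.
Proof.
rewrite /psum mulr_sumr; apply: eq_big_seq => t ht.
rewrite /odd_downup /downup_weight (size_permutations_iota ht) expr1n mulr1.
by case: (odd k); case: (downup_seq t); rewrite /= ?mul0r ?mul1r.
Qed.

End Weights.

Lemma half_succ_add_odd i m : odd i -> odd m -> (i + m).+1./2 = (i./2 + m./2).+1.
Proof. by move=> oi om; rewrite -uphalfE uphalf_half halfD oddD oi om. Qed.

Section TanhRecurrences.
Variable R : comRingType.

(* [tanh_coef k / k`!] is the k-th Taylor coefficient of tanh: the number of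
   down-up permutations of odd length k is the tangent number. *)
Definition tanh_coef k : R := (-1) ^+ k./2 * psum (odd_downup R) k.

Definition signed_downup (b : R) n : R :=
  if odd n then 0 else (-1) ^+ n./2 * psum (downup_weight b) n.

Lemma psum_odd_downupS k :
  psum (odd_downup R) k.+1 = bconv (psum (odd_downup R)) (psum (odd_downup R)) k + delta0 R k.
Proof.
case: k => [|k]; first by rewrite bconv0 psum0 psum1 /odd_downup /delta0 mul0r add0r.
rewrite /delta0 /= addr0 psum_odd_downup psum_downup_weightS // mul1r mulr_sumr.
apply: eq_bigr => i _; rewrite mulrnAr; congr (_ *+ _).
have hi : (i <= k.+1)%N by rewrite -ltnS ltn_ord.
rewrite !psum_odd_downup; case oi : (odd i) => /=; last by ring.
by rewrite oddB // oi addbT; ring.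
Qed.

Lemma tanh_coefS k : tanh_coef k.+1 = delta0 R k - bconv tanh_coef tanh_coef k.
Proof.
have -> : bconv tanh_coef tanh_coef k =
    - ((-1) ^+ k.+1./2 * bconv (psum (odd_downup R)) (psum (odd_downup R)) k).
  rewrite /bconv mulr_sumr -sumrN; apply: eq_bigr => i _.
  rewrite mulrnAr -mulNrn; congr (_ *+ _).
  have hi : (i <= k)%N by rewrite -ltnS ltn_ord.
  rewrite /tanh_coef !psum_odd_downup.
  case oi : (odd i); last by rewrite !(mul0r, mulr0, oppr0).
  case om : (odd (k - i)); last by rewrite !(mul0r, mulr0, oppr0).
  have -> : k.+1./2 = (i./2 + (k - i)./2).+1 by rewrite -half_succ_add_odd // subnKC.
  by rewrite exprS exprD; ring.
rewrite opprK addrC /tanh_coef psum_odd_downupS mulrDr; congr (_ + _).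
by case: k => [|k]; rewrite /delta0 /= ?mulr0 // expr0 mul1r.
Qed.

Lemma signed_downupS b n :
  signed_downup b n.+1 = - b * bconv tanh_coef (signed_downup b) n.
Proof.
case: n => [|n]; first by rewrite bconv0 /tanh_coef psum0 /odd_downup /signed_downup /=; ring.
have -> : bconv tanh_coef (signed_downup b) n.+1 = (odd n.+1)%:R *
    (-1) ^+ n.+1./2 * bconv (psum (odd_downup R)) (psum (downup_weight b)) n.+1.
  rewrite /bconv mulr_sumr; apply: eq_bigr => i _; rewrite mulrnAr; congr (_ *+ _).
  have hi : (i <= n.+1)%N by rewrite -ltnS ltn_ord.
  rewrite /tanh_coef /signed_downup !psum_odd_downup.
  case oi : (odd i); last by rewrite !(mul0r, mulr0).
  rewrite oddB // oi addbT; case on : (odd n.+1); last by rewrite /= !(mul0r, mulr0).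
  have -> : n.+1./2 = (i./2 + (n.+1 - i)./2)%N.
    by rewrite -{1}(subnKC hi) halfD oi oddB // oi on.
  by rewrite /= exprD; ring.
rewrite /signed_downup psum_downup_weightS //= negbK.
case en : (odd n) => /=; first by ring.
by rewrite uphalf_half en add0n exprS; ring.
Qed.

Lemma psum_sdesE k : psum (sdes R) k = delta0 R k + tanh_coef k.
Proof.
pose T j := psum (sdes R) j - delta0 R j.
have A_T j : psum (sdes R) j = delta0 R j + T j by rewrite /T addrC subrK.
have H_T j : psum (sdes_pre R) j = delta0 R j + - T j.
  rewrite psum_sdes_pre /T /delta0; case: j => [|j] /=.
    by rewrite psum0 /sdes expr0; ring.
  by ring.
have T0 : T 0%N = tanh_coef 0 by rewrite /T /tanh_coef !psum0 /sdes /odd_downup /delta0 /=; ring.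
have TS j : T j.+1 = psum (sdes R) j.+1 by rewrite /T /delta0 subr0.
clearbody T; rewrite A_T; congr (_ + _); move: k.
apply: (causal_rec_eq (F := fun w n => delta0 R n - bconv w w n)) => //.
- by move=> w w' n ww'; rewrite (eq_bconv ww' ww').
- move=> k; rewrite TS psum_sdesS (eq_bconv (fun j _ => H_T j) (fun j _ => A_T j)).
  by rewrite bconvDl bconvNl !bconvDr !bconv1l bconv1r; ring.
- exact: tanh_coefS.
Qed.

Lemma psum_sdes_preE k : psum (sdes_pre R) k = delta0 R k - tanh_coef k.
Proof.
rewrite psum_sdes_pre; case: k => [|k] /=.
  by rewrite /tanh_coef psum0 /odd_downup /delta0 /=; ring.
by rewrite psum_sdesE /delta0 /=; ring.
Qed.

End TanhRecurrences.

Section ExtremalMinima.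
Variables (R : comRingType) (x : R).

Lemma psum_lrrl_weightS n : psum (lrrl_weight x) n.+2 =
  - (2 * x) * bconv (tanh_coef R) (fun m => psum (lrrl_weight x) m.+1) n.
Proof.
set L := fun m => psum (lrrl_weight x) m.+1.
have PG_L m : bconv (psum (lr_weight x)) (psum (rl_weight x)) m = L m.
  by rewrite /L psum_lrrl_split.
have AL : bconv (fun k => psum (lr_weight x) k.+1) (psum (rl_weight x)) n =
    - x * bconv (psum (sdes R)) L n.
  rewrite (eq_bconv (fun k _ => psum_lr_weightS x k) (fun k _ => erefl)) bconvZl.
  rewrite (eq_bconv (fun k _ => bconvC _ _ k) (fun k _ => erefl)) bconvA.
  by rewrite (eq_bconv (fun k _ => erefl) (fun k _ => PG_L k)).
have HL : bconv (psum (lr_weight x)) (fun k => psum (rl_weight x) k.+1) n =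
    x * bconv (psum (sdes_pre R)) L n.
  rewrite (eq_bconv (fun k _ => erefl) (fun k _ => psum_rl_weightS x k)) bconvZr.
  rewrite -bconvA (eq_bconv (fun k _ => bconvC _ _ k) (fun k _ => erefl)) bconvA.
  by rewrite (eq_bconv (fun k _ => erefl) (fun k _ => PG_L k)).
rewrite -/(L n.+1) -PG_L bconvS AL HL.
rewrite (eq_bconv (fun k _ => psum_sdesE R k) (fun k _ => erefl)).
rewrite (eq_bconv (fun k _ => psum_sdes_preE R k) (fun k _ => erefl)).
by rewrite !bconvDl bconvNl bconv1l; ring.
Qed.

Lemma psum_lrrl_weightE n : psum (lrrl_weight x) n.+1 = signed_downup (2 * x) n.
Proof.
move: n; apply: (causal_rec_eq (F := fun w n => - (2 * x) * bconv (tanh_coef R) w n)).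
- by move=> w w' n ww'; rewrite (eq_bconv (fun _ _ => erefl) ww').
- by rewrite psum1 /signed_downup psum0 /lrrl_weight /downup_weight /sdes /=; ring.
- exact: psum_lrrl_weightS.
- exact: signed_downupS.
Qed.

End ExtremalMinima.

Lemma pword_inj m : injective (@pword m).
Proof.
move=> s1 s2 /eq_in_map e; apply/permP => i; apply: val_inj.
by apply: e; rewrite mem_enum.
Qed.

Lemma perm_pword_iota m (s : 'S_m) : perm_eq (pword s) (iota 0 m).
Proof.
rewrite /pword -val_enum_ord (map_comp val s); apply: perm_map.
apply: uniq_perm; [by rewrite map_inj_uniq ?enum_uniq //; exact: perm_inj|exact: enum_uniq|].
move=> i; rewrite mem_enum inE; apply/mapP; exists (s^-1 i)%g; first by rewrite mem_enum.
by rewrite permKV.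
Qed.

Lemma pword_onto m t : perm_eq t (iota 0 m) -> exists s : 'S_m, pword s = t.
Proof.
move=> pt; have st : size t = m by rewrite (perm_size pt) size_iota.
have t_lt (i : 'I_m) : (nth 0%N t i < m)%N.
  have : nth 0%N t i \in iota 0 m by rewrite -(perm_mem pt) mem_nth // st.
  by rewrite mem_iota.
have t_uniq : uniq t by rewrite (perm_uniq pt) iota_uniq.
pose f (i : 'I_m) : 'I_m := Ordinal (t_lt i).
have f_inj : injective f.
  move=> i j /(congr1 val) /= /eqP; rewrite nth_uniq ?st // => /eqP; exact: val_inj.
exists (perm f_inj); apply: (@eq_from_nth _ 0%N); first by rewrite size_map size_enum_ord st.
move=> i; rewrite size_map size_enum_ord => hi.
by rewrite /pword (nth_map (Ordinal hi)) ?size_enum_ord // (nth_ord_enum _ (Ordinal hi)) permE.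
Qed.

Lemma perm_pwords m :
  perm_eq (map (@pword m) (index_enum {perm 'I_m})) (permutations (iota 0 m)).
Proof.
apply: uniq_perm.
- by rewrite map_inj_uniq ?index_enum_uniq //; exact: pword_inj.
- exact: permutations_uniq.
move=> t; rewrite mem_permutations; apply/mapP/idP => [[s _ ->]|/pword_onto[s <-]].
  exact: perm_pword_iota.
by exists s; rewrite ?mem_index_enum.
Qed.

Lemma big_pword (R : nmodType) m (F : seq nat -> R) :
  \sum_(s : 'S_m) F (pword s) = \sum_(t <- permutations (iota 0 m)) F t.
Proof. by rewrite -(perm_big _ (perm_pwords m)) big_map. Qed.

Theorem theorem1p12 (R : numFieldType) (beta : R) (n : nat) :
  (1 <= n)%N ->
  \sum_(s : 'S_n.+1)
     (-1) ^+ des s * (beta / 2) ^+ (LRmin s + RLmin s - 2)%N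
  = if odd n then 0
    else (-1) ^+ (n./2) * \sum_(s : 'S_n | downup s) beta ^+ RLmin s.
Proof.
move=> _; have beta_half : 2 * (beta / 2) = beta by rewrite mulrC divfK ?pnatr_eq0.
have -> : \sum_(s : 'S_n | downup s) beta ^+ RLmin s =
    \sum_(s : 'S_n) downup_weight beta (pword s).
  rewrite big_mkcond; apply: eq_bigr => s _; rewrite /downup_weight /downup /RLmin.
  by case: (downup_seq (pword s)); rewrite ?mul1r ?mul0r.
transitivity (psum (lrrl_weight (beta / 2)) n.+1); first by rewrite /psum -big_pword.
by rewrite psum_lrrl_weightE beta_half /signed_downup /psum -big_pword.
Qed.
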